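(* Let $X$ be a Banach space and $\kappa$ an infinite cardinal. If $X$ is $\mathrm{ASQ}_{<\kappa}$, then $X$ has the $\mathrm{SD2P}_{<\kappa}$. Moreover, if $\kappa$ is uncountable and $X$ is $\mathrm{SQ}_{<\kappa}$, then $X$ has the $1$-$\mathrm{ASD2P}_{<\kappa}$.
   Context: A Banach space $X$ is $\mathrm{ASQ}_{<\kappa}$ if for every set $A\subset S_X$ with $|A|<\kappa$ and every $\varepsilon>0$ there exists $y\in S_X$ with $\|x\pm y\|\le 1+\varepsilon$ for all $x\in A$; it is $\mathrm{SQ}_{<\kappa}$ if for every such $A$ there exists $y\in S_X$ with $\|x\pm y\|\le 1$ for all $x\in A$. For $\delta>0$, a set $B\subset S_X$ is said to $\delta$-norm a set $A\subset S_{X^*}$ if $\sup_{x\in B}y^*(x)\ge\delta$ for every $y^*\in A$. $X$ has the $\mathrm{SD2P}_{<\kappa}$ if for every $A\subset S_{X^*}$ with $|A|<\kappa$ and every $\varepsilon>0$ there exist $B\subset S_X$ and $x^*\in S_{X^*}$ such that $x^*(x)\ge 1-\varepsilon$ for all $x\in B$ and $B$ $(1-\varepsilon)$-norms $A$. $X$ has the $1$-$\mathrm{ASD2P}_{<\kappa}$ if for every $A\subset S_{X^*}$ with $|A|<\kappa$ there exist $B\subset S_X$ and $x^*\in S_{X^*}$ such that $x^*(x)=1$ for all $x\in B$ and $B$ $1$-norms $A$. *)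

From HB Require Import structures.
From mathcomp Require Import all_boot all_order all_algebra.
From mathcomp Require Import all_classical all_reals all_analysis.
Set Implicit Arguments. Unset Strict Implicit. Unset Printing Implicit Defensive.
Import Order.TTheory GRing.Theory Num.Theory.
Import numFieldNormedType.Exports.
Local Open Scope classical_set_scope.
Local Open Scope ring_scope.

Section Defs.
Variables (R : realType) (X : normedModType R).

(* cardinality |A| < kappa, kappa represented as the cardinal of the type K *)
Definition card_lt (T K : Type) (A : set T) :=
  (A #<= [set: K])%card /\ ~ ([set: K] #<= A)%card.

Definition sphere : set X := [set x | `|x| = 1].

Definition is_functional (f : X -> R) :=
  (forall (a : R) (x y : X), f (a *: x + y) = a * f x + f y) /\ continuous f.

Definition dual_norm (f : X -> R) : R :=
  sup [set `|f x| | x in [set x : X | `|x| <= 1]].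

Definition dual_sphere : set (X -> R) :=
  [set f | is_functional f /\ dual_norm f = 1].

(* B delta-norms A : sup_{x in B} y^*(x) >= delta for every y^* in A
   (sup taken in the extended reals, so sup over empty B is -oo) *)
Definition dnorms (delta : R) (B : set X) (A : set (X -> R)) :=
  forall ys, A ys -> forall t, t < delta -> exists2 x, B x & t < ys x.

Definition ASQ_lt (K : Type) :=
  forall A : set X, A `<=` sphere -> card_lt K A ->
  forall eps : R, 0 < eps ->
  exists2 y, sphere y &
    forall x, A x -> `|x + y| <= 1 + eps /\ `|x - y| <= 1 + eps.

Definition SQ_lt (K : Type) :=
  forall A : set X, A `<=` sphere -> card_lt K A ->
  exists2 y, sphere y &
    forall x, A x -> `|x + y| <= 1 /\ `|x - y| <= 1.

Definition SD2P_lt (K : Type) :=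
  forall A : set (X -> R), A `<=` dual_sphere -> card_lt K A ->
  forall eps : R, 0 < eps ->
  exists B : set X, exists xs : X -> R,
    [/\ B `<=` sphere, dual_sphere xs,
        (forall x, B x -> 1 - eps <= xs x) & dnorms (1 - eps) B A].

Definition ASD2P1_lt (K : Type) :=
  forall A : set (X -> R), A `<=` dual_sphere -> card_lt K A ->
  exists B : set X, exists xs : X -> R,
    [/\ B `<=` sphere, dual_sphere xs,
        (forall x, B x -> xs x = 1) & dnorms 1 B A].

End Defs.

From HB Require Import structures.
From mathcomp Require Import all_boot all_order all_algebra.
From mathcomp Require Import all_classical all_reals all_analysis.
From mathcomp Require Import lra.
Import Order.TTheory GRing.Theory Num.Theory.
Import numFieldNormedType.Exports.
Local Open Scope classical_set_scope.

Set Implicit Arguments. Unset Strict Implicit. Unset Printing Implicit Defensive.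

(* For f in A pick x_f in S_X with f(x_f) close to 1, let y be the vector that
   the (almost) square property provides for the set of all x_f, and let y*
   norm y (Hahn-Banach).  Every g in S_{X*} satisfies
   g(x + y) >= 2 g(x) - ||x - y||, so y* and f are both almost 1 at x_f + y and
   the normalised vectors x_f + y form the required slice.  For the 1-ASD2P take
   a sequence x_{f,n} with f(x_{f,n}) -> 1: now ||x + y|| <= 1 <= y*(x + y), so
   x + y lies in the face {y* = 1}; the family of all x_{f,n} is still small
   because |A x N| <= max(|A|, aleph_0) < kappa for uncountable kappa. *)

(** * Cardinal arithmetic: |A x nat| = |A| for infinite A *)

Lemma pcard_le_funP T (U : pointedType) (A : set T) (B : set U) :
  (A #<= B)%card <-> exists2 f : T -> U, set_fun A B f & set_inj A f.
Proof. by rewrite -injfunPex; split => /pcard_leP. Qed.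

Lemma bigcup_chain2 T (F : set (set T)) x y : total_on F subset ->
  (\bigcup_(G in F) G) x -> (\bigcup_(G in F) G) y -> exists2 G, F G & G x /\ G y.
Proof.
move=> Ftot [G1 FG1 G1x] [G2 FG2 G2y].
by have [/(_ x G1x)|/(_ y G2y)] := Ftot _ _ FG1 FG2; [exists G2|exists G1].
Qed.

Section AbsorbingGraph.
Variable T : Type.
Implicit Types G : set ((T * nat) * T).

Definition keys G := [set a | exists n b, G ((a, n), b)].

(* [G] is the graph of an injection from [keys G `*` [set: nat]] into [keys G]. *)
Definition absorbing G :=
  [/\ forall p b b', G (p, b) -> G (p, b') -> b = b',
      forall p p' b, G (p, b) -> G (p', b) -> p = p',
      forall a n, keys G a -> exists b, G ((a, n), b)
    & forall p b, G (p, b) -> keys G b].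

Lemma absorbing_bigcup (F : set (set ((T * nat) * T))) :
  F `<=` absorbing -> total_on F subset -> absorbing (\bigcup_(G in F) G).
Proof.
move=> Fabs Ftot; split.
- move=> p b b' Gb Gb'; have [G /Fabs[fG _ _ _] []] := bigcup_chain2 Ftot Gb Gb'.
  exact: fG.
- move=> p p' b Gp Gp'; have [G /Fabs[_ iG _ _] []] := bigcup_chain2 Ftot Gp Gp'.
  exact: iG.
- move=> a n [m [b [G FG Gab]]]; have [_ _ + _] := Fabs _ FG.
  by move=> /(_ a n (ex_intro _ m (ex_intro _ b Gab))) [b' Gb']; exists b'; exists G.
- move=> p b [G FG Gpb]; have [_ _ _ /(_ _ _ Gpb) [n [b' Gb']]] := Fabs _ FG.
  by exists n, b'; exists G.
Qed.

Lemma absorbingU G1 G2 : absorbing G1 -> absorbing G2 ->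
  (forall a, keys G1 a -> ~ keys G2 a) -> absorbing (G1 `|` G2).
Proof.
move=> [f1 i1 t1 r1] [f2 i2 t2 r2] disj.
have key1 a n b : G1 ((a, n), b) -> keys G1 a by exists n, b.
have key2 a n b : G2 ((a, n), b) -> keys G2 a by exists n, b.
split.
- move=> [a n] b b' [G1b|G2b] [G1b'|G2b'].
  + exact: f1 G1b G1b'.
  + by case: (disj a); [exact: key1 G1b|exact: key2 G2b'].
  + by case: (disj a); [exact: key1 G1b'|exact: key2 G2b].
  + exact: f2 G2b G2b'.
- move=> p p' b [G1p|G2p] [G1p'|G2p'].
  + exact: i1 G1p G1p'.
  + by case: (disj b); [exact: r1 G1p|exact: r2 G2p'].
  + by case: (disj b); [exact: r1 G1p'|exact: r2 G2p].
  + exact: i2 G2p G2p'.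
- move=> a n [m [b [G1b|G2b]]].
    by have [b' ?] := t1 a n (key1 _ _ _ G1b); exists b'; left.
  by have [b' ?] := t2 a n (key2 _ _ _ G2b); exists b'; right.
- by move=> p b [/r1|/r2] [n [b' ?]]; exists n, b'; [left|right].
Qed.

Definition block_graph (e : nat -> T) : set ((T * nat) * T) :=
  [set ((e i, n), e (pickle (i, n))) | i in [set: nat] & n in [set: nat]].

Lemma keys_block_graph e : keys (block_graph e) = range e.
Proof.
apply/seteqP; split => [a [n [b [i _ [m _ [<- _ _]]]]]|_ [i _ <-]]; first by exists i.
by exists 0%N, (e (pickle (i, 0%N))), i => //; exists 0%N.
Qed.

Lemma absorbing_block_graph e : injective e -> absorbing (block_graph e).
Proof.
move=> einj; have pinj := pcan_inj (@pickleK (nat * nat)%type).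
split.
- by move=> _ b b' [i _ [n _ [<- <-]]] [i' _ [n' _ [/einj <- <- <-]]].
- by move=> _ _ b [i _ [n _ [<- <-]]] [i' _ [n' _ [<- /einj/pinj[-> ->]]]].
- move=> a n; rewrite keys_block_graph => -[i _ <-].
  by exists (e (pickle (i, n))), i => //; exists n.
- by move=> _ _ [i _ [n _ [_ <-]]]; rewrite keys_block_graph; exists (pickle (i, n)).
Qed.

Lemma keysU G1 G2 : keys (G1 `|` G2) = keys G1 `|` keys G2.
Proof.
apply/seteqP; split => [a [n [b [Gb|Gb]]]|a [|] [n [b Gb]]].
- by left; exists n, b.
- by right; exists n, b.
- by exists n, b; left.
- by exists n, b; right.
Qed.

End AbsorbingGraph.

Lemma exists_absorbing_cofinite (T : pointedType) (A : set T) :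
  exists G : set ((T * nat) * T),
    [/\ absorbing G, keys G `<=` A & finite_set (A `\` keys G)].
Proof.
pose P G := absorbing G /\ keys G `<=` A.
have [M [[Mabs MA] Mmax]] : exists M, P M /\ forall B, M `<` B -> ~ P B.
  apply: Zorn_bigcup => F FP Ftot; split.
    by apply: absorbing_bigcup => // G /FP[].
  by move=> a [n [b [G /FP[_ GA] Gab]]]; apply: GA; exists n, b.
(* Outside [keys M] there is no infinite sequence, else its block graph extends [M]. *)
exists M; split => //; apply: contrapT => /infiniteP/pcard_le_funP[e eM einj].
have {}einj : injective e by move=> i j; apply: einj; rewrite inE.
have eMk i : ~ keys M (e i) by have [] := eM i I.
apply: (Mmax (M `|` block_graph e)); first split.
- exact: subsetUl.
- move=> /(_ ((e 0, 0), e (pickle (0, 0)))%N) MN; apply: (eMk 0%N).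
  by exists 0%N, (e (pickle (0, 0)%N)); apply: MN; right; exists 0%N => //; exists 0%N.
split.
- apply: absorbingU => //; first exact: absorbing_block_graph.
  by move=> a Ma; rewrite keys_block_graph => -[i _ ei]; apply: (eMk i); rewrite ei.
- rewrite keysU keys_block_graph => a [/MA //|[i _ <-]].
  by have [] := eM i I.
Qed.

Lemma absorbing_card_le (T : pointedType) (G : set ((T * nat) * T)) :
  absorbing G -> (keys G `*` [set: nat] #<= keys G)%card.
Proof.
move=> [fG iG tG rG].
have /choice[h hG] : forall q : T * nat, exists b, keys G q.1 -> G (q, b).
  move=> [a n]; have [/(tG a n)[b Gb]|] := pselect (keys G a); first by exists b.
  by exists point.
apply/pcard_le_funP; exists h; first by move=> [a n] [Ka _]; exact: rG (hG _ Ka).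
move=> [a n] [a' n'] /set_mem[Ka _] /set_mem[Ka' _] hq.
by apply: (iG _ _ (h (a, n))) (hG _ Ka) _; rewrite hq; exact: hG.
Qed.

Lemma card_le_setX_nat_countableD (T : pointedType) (A D : set T) : D !=set0 ->
  countable (A `\` D) -> (A `*` [set: nat] #<= D `*` [set: nat])%card.
Proof.
move=> [d0 Dd0] /pcard_le_funP[idx _ idxinj].
have pinj := pcan_inj (@pickleK (nat * nat)%type).
pose sh (q : T * nat) := if `[< D q.1 >] then (q.1, q.2.*2)
  else (d0, (pickle (idx q.1, q.2)).*2.+1).
apply/pcard_le_funP; exists sh; first by move=> [a n] _; rewrite /sh /=; case: asboolP.
move=> [a n] [a' n'] /set_mem[Aa _] /set_mem[Aa' _]; rewrite /sh /=.
case: asboolP => Da; case: asboolP => Da' [] //.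
- by move=> -> /double_inj ->.
- by move=> _ /(congr1 odd); rewrite /= !odd_double.
- by move=> _ /(congr1 odd); rewrite /= !odd_double.
move=> /double_inj/pinj[ia ->].
by rewrite (idxinj a a') // inE.
Qed.

Lemma card_setX_nat_le T (A : set T) : infinite_set A -> (A `*` [set: nat] #<= A)%card.
Proof.
elim/Ppointed: T => T in A *.
  by rewrite (empty_eq0 A) => /(_ (finite_set0 _)).
move=> Ainf; have [G [Gabs GA Gfin]] := exists_absorbing_cofinite A.
have Ginf : infinite_set (keys G).
  by move=> Gfin'; apply: Ainf; rewrite -(setDUK GA) finite_setU.
apply: card_le_trans (card_le_setX_nat_countableD (infinite_setN0 Ginf) (finite_set_countable Gfin)) _.
apply: card_le_trans (absorbing_card_le Gabs) _.
exact: subset_card_le.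
Qed.

Lemma card_lt_le K T U (A : set T) (B : set U) :
  (B #<= A)%card -> card_lt K A -> card_lt K B.
Proof.
move=> BA [AK KA]; split; first exact: card_le_trans BA AK.
by move=> KB; apply: KA; exact: card_le_trans KB BA.
Qed.

Lemma card_lt_setX_nat K T (A : set T) : ~ countable [set: K] ->
  card_lt K A -> card_lt K (A `*` [set: nat]).
Proof.
move=> Kunc AK; have [Afin|Ainf] := pselect (finite_set A); last first.
  exact: card_lt_le (card_setX_nat_le Ainf) AK.
have AN : countable (A `*` [set: nat]).
  by apply: countableX; [exact: finite_set_countable|exact: countableP].
split; last by move=> /card_le_trans/(_ AN).
apply: card_le_trans AN _; apply/infiniteP => Kfin.
by apply: Kunc; exact: finite_set_countable.
Qed.

Local Open Scope ring_scope.

Section Functionals.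
Variables (R : realType) (X : normedModType R).
Implicit Types (f : X -> R) (x y : X).

Lemma functional0 f : is_functional f -> f 0 = 0.
Proof.
by case=> lin _; have /esym/(canRL (addrK _)) := lin 1 0 0; rewrite scale1r addr0 mul1r subrr.
Qed.

Lemma functionalZ f a x : is_functional f -> f (a *: x) = a * f x.
Proof. by move=> hf; have := hf.1 a x 0; rewrite addr0 functional0 // addr0. Qed.

Lemma functionalD f x y : is_functional f -> f (x + y) = f x + f y.
Proof. by move=> hf; have := hf.1 1 x y; rewrite scale1r mul1r. Qed.

Lemma functionalB f x y : is_functional f -> f (x - y) = f x - f y.
Proof. by move=> hf; rewrite functionalD // -scaleN1r functionalZ // mulN1r. Qed.

Lemma is_functional_bounded f :
  (forall (a : R) x y, f (a *: x + y) = a * f x + f y) ->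
  (forall x, `|f x| <= `|x|) -> is_functional f.
Proof.
move=> lin fx; have fB x y : f (x - y) = f x - f y.
  by rewrite addrC -scaleN1r lin mulN1r addrC.
split => // x; apply/cvgrPdist_lt => e e0; near=> z.
rewrite -fB; apply: le_lt_trans (fx _) _; near: z.
exact: cvgr_dist_lt.
Unshelve. all: by end_near.
Qed.

Lemma dual_sphere_le f x : dual_sphere f -> `|f x| <= `|x|.
Proof.
move=> [hf nf]; have [->|x0] := eqVneq x 0; first by rewrite functional0 // normr0.
have hub : has_ubound [set `|f z| | z in [set z : X | `|z| <= 1]].
  apply: contrapT => nub; move: nf; rewrite /dual_norm sup_out => [/eqP|[]//].
  by rewrite eq_sym oner_eq0.
have : `|f (`|x|^-1 *: x)| <= 1.
  by rewrite -nf; apply: ub_le_sup => //; exists (`|x|^-1 *: x) => //=; rewrite normfZV.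
rewrite functionalZ // normrM normfV normr_id ler_pdivrMl ?normr_gt0 //.
by rewrite mulr1.
Qed.

Lemma dual_sphere_norming f y : is_functional f -> (forall x, `|f x| <= `|x|) ->
  sphere y -> f y = 1 -> dual_sphere f.
Proof.
move=> hf fx y1 fy1; split => //; apply/eqP; rewrite eq_le; apply/andP; split.
  apply: ge_sup; first by exists `|f 0|, 0 => //=; rewrite normr0.
  by move=> _ [x /= x1 <-]; exact: le_trans (fx x) x1.
apply: ub_le_sup; last by exists y; rewrite /= ?y1 ?fy1 ?normr1.
by exists 1 => _ [x /= x1 <-]; exact: le_trans (fx x) x1.
Qed.

Lemma dual_sphere_almost_norming f d : dual_sphere f -> 0 < d ->
  exists2 x, sphere x & 1 - d < f x.
Proof.
move=> [hf nf] d0; have /sup_gt[] : 1 - Order.min d 1 < dual_norm f.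
- by rewrite nf ltrBlDr ltrDl lt_min d0 ltr01.
- by exists `|f 0|, 0 => //=; rewrite normr0.
move=> _ [x /= x1 <-] fx; have dmin : 1 - d <= 1 - Order.min d 1.
  by rewrite lerD2l lerN2 ge_min lexx.
have fx0 : f x != 0.
  by apply: contraTneq fx => ->; rewrite normr0 -leNgt subr_ge0 ge_min lexx orbT.
have x0 : x != 0 by apply: contraNneq fx0 => ->; rewrite functional0.
exists ((Num.sg (f x) / `|x|) *: x).
  by rewrite /sphere /= normrZ normrM normfV normr_id normr_sg fx0 mul1r mulVf ?normr_eq0.
rewrite functionalZ // mulrAC -normrEsg; apply: lt_le_trans (le_lt_trans dmin fx) _.
by rewrite ler_peMr // invf_ge1 ?normr_gt0.
Qed.

Lemma dual_sphere_add_ge f x y : dual_sphere f -> 2 * f x - `|x - y| <= f (x + y).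
Proof.
move=> hf; have := dual_sphere_le (x - y) hf; have [fl _] := hf.
by rewrite (functionalB x y fl) (functionalD x y fl) ler_norml => /andP[_]; lra.
Qed.

Lemma almost_norming_points (A : set (X -> R)) : A `<=` @dual_sphere R X ->
  exists g : (X -> R) -> R -> X,
    forall f d, A f -> 0 < d -> sphere (g f d) /\ 1 - d < f (g f d).
Proof.
move=> Asub; have /choice[g hg] : forall q : (X -> R) * R,
    exists x, A q.1 -> 0 < q.2 -> sphere x /\ 1 - q.2 < q.1 x.
  move=> [f d]; have [[Af d0]|Afd] := pselect (A f /\ 0 < d); last first.
    by exists 0 => Af d0; case: Afd.
  by have [x] := dual_sphere_almost_norming (Asub f Af) d0; exists x.
by exists (fun f d => g (f, d)) => f d; exact: (hg (f, d)).
Qed.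

End Functionals.

(** * Hahn-Banach extension of norm-dominated functionals *)

Section NormDominatedGraph.
Variables (R : realType) (X : normedModType R).
Implicit Types (G : set (X * R)) (x u v : X).

Definition linear_graph G :=
  forall (a : R) p q, G p -> G q -> G (a *: p.1 + q.1, a * p.2 + q.2).

Definition functional_graph G := forall x (r s : R), G (x, r) -> G (x, s) -> r = s.

Definition dominated_graph G :=
  [/\ linear_graph G, functional_graph G & forall x r, G (x, r) -> r <= `|x|].

Lemma linear_graph0 G p : linear_graph G -> G p -> G (0, 0).
Proof. by move=> lin Gp; have := lin (-1) _ _ Gp Gp; rewrite scaleN1r mulN1r !addNr. Qed.

Lemma linear_graphZ G a x r : linear_graph G -> G (x, r) -> G (a *: x, a * r).
Proof.
by move=> lin Gx; have := lin a _ _ Gx (linear_graph0 lin Gx); rewrite /= !addr0.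
Qed.

Lemma linear_graphB G x r u s : linear_graph G -> G (x, r) -> G (u, s) ->
  G (u - x, s - r).
Proof.
by move=> lin Gx Gu; have := lin (-1) _ _ Gx Gu; rewrite /= scaleN1r mulN1r !(addrC (- _)).
Qed.

Lemma dominated_graph_bigcup (F : set (set (X * R))) :
  F `<=` dominated_graph -> total_on F subset -> dominated_graph (\bigcup_(G in F) G).
Proof.
move=> Fdom Ftot; split.
- move=> a p q Gp Gq; have [G FG [{}Gp {}Gq]] := bigcup_chain2 Ftot Gp Gq.
  by exists G => //; have [lin _ _] := Fdom _ FG; exact: lin.
- move=> x r s Gr Gs; have [G /Fdom[_ fG _] []] := bigcup_chain2 Ftot Gr Gs.
  exact: fG.
- by move=> x r [G /Fdom[_ _ dG] /dG].
Qed.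

(* Any value between these two bounds extends [G] to [x0]. *)
Lemma dominated_graph_gap G x0 u r v s : dominated_graph G ->
  G (u, r) -> G (v, s) -> s - `|v - x0| <= `|u + x0| - r.
Proof.
move=> [lin _ dG] Gu Gv; have /dG := lin 1 _ _ Gu Gv; rewrite /= scale1r mul1r.
have : `|u + v| <= `|u + x0| + `|v - x0|.
  by have := ler_normD (u + x0) (v - x0); rewrite addrACA subrr addr0.
lra.
Qed.

Definition graph_extension G x0 (c : R) : set (X * R) :=
  [set (p.1 + t *: x0, p.2 + t * c) | p in G & t in [set: R]].

Section GraphExtension.
Variables (G : set (X * R)) (x0 : X) (c : R).
Hypotheses (Gdom : dominated_graph G) (G0 : G (0, 0)) (Gx0 : forall r, ~ G (x0, r)).
Hypothesis c_ge : forall v s, G (v, s) -> s - `|v - x0| <= c.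
Hypothesis c_le : forall u r, G (u, r) -> c <= `|u + x0| - r.

Lemma graph_extension_proper : G `<` graph_extension G x0 c.
Proof.
split => [[u r] Gu|]; first by exists (u, r) => //; exists 0 => //=; rewrite scale0r mul0r !addr0.
move=> /(_ (x0, c)) Gx0c; apply/Gx0/Gx0c.
by exists (0, 0) => //; exists 1 => //=; rewrite scale1r mul1r !add0r.
Qed.

Lemma graph_extension_linear : linear_graph (graph_extension G x0 c).
Proof.
have [lin _ _] := Gdom.
move=> a _ _ [p1 G1 [t1 _ <-]] [p2 G2 [t2 _ <-]] /=.
exists (a *: p1.1 + p2.1, a * p1.2 + p2.2); first exact: lin.
exists (a * t1 + t2) => //=; congr pair; last by rewrite mulrDl mulrDr mulrA addrACA.
by rewrite scalerDr scalerA scalerDl addrACA.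
Qed.

Lemma graph_extension_functional : functional_graph (graph_extension G x0 c).
Proof.
have [lin fG _] := Gdom.
move=> x r s [[u r1] G1 [t _ [<- <-]]] [[u' r1'] G1' [t' _ [eqx <-]]] /=.
have tt' : t = t'.
  apply: contrapT => /eqP; rewrite -subr_eq0 => dt0.
  apply: (@Gx0 ((t - t')^-1 * (r1' - r1))).
  have -> : x0 = (t - t')^-1 *: (u' - u).
    have -> : u' - u = (t - t') *: x0.
      by apply/eqP; rewrite scalerBl subr_eq addrAC eq_sym subr_eq eqx addrC.
    by rewrite scalerA mulVf ?scale1r.
  exact: linear_graphZ lin (linear_graphB lin G1 G1').
by move: eqx; rewrite tt' => /addIr equ; rewrite equ in G1'; rewrite (fG _ _ _ G1 G1').
Qed.
Lemma graph_extension_dominated x r : graph_extension G x0 c (x, r) -> r <= `|x|.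
Proof.
have [lin _ dG] := Gdom.
move=> [[u r1] G1 [t _ [<- <-]]] /=.
have [t0|t0|->] := ltgtP t 0; last by rewrite scale0r mul0r !addr0; exact: dG.
- have := c_ge (linear_graphZ (- t)^-1 lin G1).
  have -> : (- t)^-1 *: u - x0 = (- t)^-1 *: (u + t *: x0).
    by rewrite scalerDr scalerA invrN mulNr mulVf ?lt_eqF // scaleN1r.
  rewrite normrZ gtr0_norm ?invr_gt0 ?oppr_gt0 // -mulrBr.
  by rewrite ler_pdivrMl ?oppr_gt0 // mulNr; lra.
- have := c_le (linear_graphZ t^-1 lin G1).
  have -> : t^-1 *: u + x0 = t^-1 *: (u + t *: x0).
    by rewrite scalerDr scalerA mulVf ?gt_eqF // scale1r.
  rewrite normrZ gtr0_norm ?invr_gt0 // -mulrBr.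
  by rewrite ler_pdivlMl //; lra.
Qed.

End GraphExtension.

Lemma dominated_graph_extend G x0 : dominated_graph G -> G (0, 0) ->
  (forall r, ~ G (x0, r)) -> exists2 G', G `<` G' & dominated_graph G'.
Proof.
move=> Gdom G0 Gx0; pose L := [set p.2 - `|p.1 - x0| | p in G].
have c_ge v s : G (v, s) -> s - `|v - x0| <= sup L.
  move=> Gv; apply: ub_le_sup; last by exists (v, s).
  by exists (`|0 + x0| - 0) => _ [[v' s'] Gv' <-]; exact: dominated_graph_gap Gdom G0 Gv'.
have c_le u r : G (u, r) -> sup L <= `|u + x0| - r.
  move=> Gu; apply: ge_sup; first by exists (0 - `|0 - x0|), (0, 0).
  by move=> _ [[v s] Gv <-]; exact: dominated_graph_gap Gdom Gu Gv.
exists (graph_extension G x0 (sup L)); first exact: graph_extension_proper.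
split; [exact: graph_extension_linear|exact: graph_extension_functional|].
exact: graph_extension_dominated.
Qed.

Lemma exists_norming_functional y : y != 0 ->
  exists2 f : X -> R, dual_sphere f & f y = `|y|.
Proof.
move=> y0; pose Ly := [set (t *: y, t * `|y|) | t in [set: R]].
have Ly_dom : dominated_graph Ly.
  split.
  - move=> a _ _ [t1 _ <-] [t2 _ <-]; exists (a * t1 + t2) => //=.
    by rewrite scalerDl scalerA mulrDl mulrA.
  - move=> x r s [t1 _ [<- <-]] [t2 _ [/eqP + <-]].
    by rewrite -subr_eq0 -scalerBl scaler_eq0 (negPf y0) orbF subr_eq0 => /eqP ->.
  - by move=> _ _ [t _ [<- <-]]; rewrite normrZ ler_wpM2r // ler_norm.
(* The empty graph is admitted so that the empty chain has an upper bound. *)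
pose P G := dominated_graph G /\ (G !=set0 -> G (y, `|y|)).
have [M [[Mdom My] Mmax]] : exists M, P M /\ forall B, M `<` B -> ~ P B.
  apply: Zorn_bigcup => F FP Ftot; split.
    by apply: dominated_graph_bigcup => // G /FP[].
  by move=> [p [G FG Gp]]; exists G => //; apply: (FP G FG).2; exists p.
have {}My : M (y, `|y|).
  apply: contrapT => nMy; apply: (Mmax Ly); last first.
    by split => // _; exists 1 => //=; rewrite scale1r mul1r.
  have -> : M = set0 by rewrite -subset0 => p Mp; apply/nMy/My; exists p.
  by split => // /(_ (y, `|y|)); apply; exists 1 => //=; rewrite scale1r mul1r.
have [lin fM dM] := Mdom; have M0 := linear_graph0 lin My.
have /choice[f Mf] x : exists r, M (x, r).
  apply: contrapT => nMx.
  have [G' MG' G'dom] := dominated_graph_extend Mdom M0 (fun r Mr => nMx (ex_intro _ r Mr)).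
  by apply: (Mmax G' MG'); split => // _; exact: MG'.1.
have flin (a : R) x z : f (a *: x + z) = a * f x + f z.
  exact: fM (Mf _) (lin a _ _ (Mf x) (Mf z)).
have fy : f y = `|y| := fM _ _ _ (Mf y) My.
have fle x : `|f x| <= `|x|.
  rewrite ler_norml dM ?andbT; last exact: Mf.
  have := dM _ _ (Mf (- x)); rewrite normrN -[- x]addr0 -scaleN1r flin mulN1r.
  by rewrite (fM _ _ _ (Mf 0) M0) addr0 lerNl.
have fis := is_functional_bounded flin fle.
exists f => //; apply: (dual_sphere_norming fis fle (normfZV y0)).
by rewrite functionalZ // fy mulVf ?normr_eq0.
Qed.

End NormDominatedGraph.

Lemma div_near1_ge (R : realFieldType) (d a n : R) : 0 <= a -> 0 < n -> n <= 1 + d ->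
  1 - 3 * d <= a -> 1 - 4 * d <= a / n.
Proof.
move=> a0 n0 nd da; rewrite ler_pdivlMr //.
have [d4|d4] := lerP (1 - 4 * d) 0; first by rewrite (le_trans _ a0) // mulr_le0_ge0 // ltW.
by apply: le_trans (ler_wpM2l (ltW d4) nd) _; nra.
Qed.

Section SquarenessDiameterTwo.
Variables (R : realType) (X : normedModType R).

Lemma sphere_neq0 (y : X) : sphere y -> y != 0.
Proof. by rewrite /sphere /= => y1; rewrite -normr_eq0 y1 oner_eq0. Qed.

Lemma ASQ_lt_SD2P_lt K : ASQ_lt X K -> SD2P_lt X K.
Proof.
move=> asq A Asub AK eps eps0.
(* [d < 1] keeps [ys (z f)] positive below, hence [z f != 0]. *)
pose d := Order.min eps 1 / 4.
have d0 : 0 < d by rewrite divr_gt0 // lt_min eps0 ltr01.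
have d_eps : 4 * d <= eps by rewrite mulrC divfK // ge_min lexx.
have d1 : 4 * d <= 1 by rewrite mulrC divfK // ge_min lexx orbT.
have [g hg] := almost_norming_points Asub.
have [|y y1 hy] := asq [set g f d | f in A] _ (card_lt_le (card_image_le _ _) AK) d d0.
  by move=> _ [f Af <-]; case: (hg f d Af d0).
have [ys ys1] := exists_norming_functional (sphere_neq0 y1); rewrite y1 => ysy.
pose z f := g f d + y.
have z_est f : A f -> [/\ 0 < `|z f|, `|z f| <= 1 + d,
    1 - 3 * d <= ys (z f) & 1 - 3 * d <= f (z f)].
  move=> Af; have [_ fg] := hg f d Af d0.
  have [zd gyd] := hy _ (ex_intro2 _ _ f Af erefl).
  have := dual_sphere_add_ge (g f d) y (Asub f Af).
  have := dual_sphere_add_ge y (g f d) ys1; rewrite ysy (addrC y (g f d)) (distrC y).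
  have := ler_norm (ys (z f)); have := dual_sphere_le (z f) ys1.
  by rewrite /z; split; lra.
have ratio h f : A f -> is_functional h -> 1 - 3 * d <= h (z f) ->
    1 - eps <= h (`|z f|^-1 *: z f).
  move=> Af hf hz; have [z0 zd _ fz] := z_est f Af.
  rewrite functionalZ // mulrC; apply: le_trans (div_near1_ge _ z0 zd hz); lra.
exists [set `|z f|^-1 *: z f | f in A], ys; split => //.
- move=> _ [f Af <-]; have [z0 _ _ _] := z_est f Af.
  by rewrite /sphere /= normfZV // -normr_gt0.
- by move=> _ [f Af <-]; have [_ _ ysz _] := z_est f Af; exact: ratio ys1.1 ysz.
- move=> f Af t t_lt; exists (`|z f|^-1 *: z f); first by exists f.
  have [_ _ _ fz] := z_est f Af; apply: lt_le_trans t_lt _.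
  exact: ratio (Asub f Af).1 fz.
Qed.

Lemma SQ_lt_ASD2P1_lt K : ~ countable [set: K] -> SQ_lt X K -> ASD2P1_lt X K.
Proof.
move=> Kunc sq A Asub AK; have [g hg] := almost_norming_points Asub.
pose u n : R := n.+1%:R^-1; have u0 n : 0 < u n by rewrite invr_gt0.
pose C := [set g q.1 (u q.2) | q in A `*` [set: nat]].
have [|y y1 hy] := sq C _ (card_lt_le (card_image_le _ _) (card_lt_setX_nat Kunc AK)).
  by move=> _ [[f n] [Af _] <-]; case: (hg f (u n) Af (u0 n)).
have [ys ys1] := exists_norming_functional (sphere_neq0 y1); rewrite y1 => ysy.
exists [set b | sphere b /\ ys b = 1], ys; split => //; try by move=> b [].
move=> f Af t t_lt; have [|n tn] := @ltr_add_invr _ ((t + 1) / 2) 1; first lra.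
have [_ fx] := hg f (u n) Af (u0 n); set x := g f (u n) in fx *.
have [xy1 xy1'] := hy x (ex_intro2 _ _ (f, n) (conj Af I) erefl).
have := dual_sphere_add_ge x y (Asub f Af).
have := dual_sphere_add_ge y x ys1; rewrite ysy (addrC y x) (distrC y x).
have := ler_norm (ys (x + y)); have := dual_sphere_le (x + y) ys1.
rewrite -/(u n) in tn => ys_le ys_abs ys_ge f_ge.
have ys_xy : ys (x + y) = 1 by lra.
by exists (x + y); [split => //; rewrite /sphere /=|]; lra.
Qed.

End SquarenessDiameterTwo.

Theorem proposition5p3 (R : realType) (X : completeNormedModType R) (K : Type) :
  infinite_set [set: K] ->
  (ASQ_lt X K -> SD2P_lt X K) /\
  (~ countable [set: K] -> SQ_lt X K -> ASD2P1_lt X K).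
Proof.
by move=> _; split; [exact: ASQ_lt_SD2P_lt|exact: SQ_lt_ASD2P1_lt].
Qed.
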